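(* Let $F$ be an imaginary quadratic field other than $\mathbb{Q}(\sqrt{-1})$ and $\mathbb{Q}(\sqrt{-3})$, $\Gamma\subset\mathrm{SL}_2(F)$ an arithmetic subgroup, $P$ a parabolic subgroup of $\mathrm{Res}_{F/\mathbb{Q}}(\mathrm{SL}_{2/F})$ with unipotent radical $U_P$, and $R$ a ring in which $2$ is invertible. Put $\Gamma_P=\Gamma\cap P(\mathbb{Q})$ and $\Gamma_{U_P}=\Gamma\cap U_P(\mathbb{Q})$. Then $H^1(\Gamma_P,R)\cong H^1(\Gamma_{U_P},R)$.
   Context: Group cohomology with trivial coefficients $R$, so $H^1(\cdot,R)=\mathrm{Hom}(\cdot,R)$. *)

From HB Require Import structures.
From mathcomp Require Import all_boot all_order all_algebra all_field.
Set Implicit Arguments. Unset Strict Implicit. Unset Printing Implicit Defensive.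
Import Order.TTheory GRing.Theory Num.Theory.
Local Open Scope ring_scope.

Notation M2 := ('M[algC]_2).

Definition squarefree_nat (d : nat) : Prop :=
  (0 < d)%N /\ forall p : nat, prime p -> ~~ (p * p %| d)%N.

Definition inF (d : nat) (z : algC) : Prop :=
  exists a b : rat, z = ratr a + ratr b * sqrtC (- (d%:R)).

Definition inOF (d : nat) (z : algC) : Prop := inF d z /\ z \in Aint.

Definition SL2 (K : algC -> Prop) (x : M2) : Prop :=
  (forall i j, K (x i j)) /\ \det x = 1.

Definition is_subgroup_SL2F (d : nat) (G : M2 -> Prop) : Prop :=
  (forall x, G x -> SL2 (inF d) x) /\ G 1 /\
  (forall x y, G x -> G y -> G (x * y)) /\ (forall x, G x -> G (invmx x)).

Definition finite_index (H G : M2 -> Prop) : Prop :=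
  exists s : seq M2, (forall t, t \in s -> G t) /\
    forall g, G g -> exists2 t, t \in s & H (invmx t * g).

(* arithmetic subgroup: commensurable with SL_2(O_F) *)
Definition arithmetic_subgroup (d : nat) (G : M2 -> Prop) : Prop :=
  is_subgroup_SL2F d G /\
  finite_index (fun x => G x /\ SL2 (inOF d) x) G /\
  finite_index (fun x => G x /\ SL2 (inOF d) x) (SL2 (inOF d)).

(* Given g in GL_2(F), the Q-points of the (proper) parabolic subgroup
   P = g B g^-1 of Res_{F/Q} SL_2 (B = upper triangular Borel) and of its
   unipotent radical U_P = g N g^-1 (N = upper unipotent). *)
Definition is_GL2F (d : nat) (g : M2) : Prop :=
  (forall i j, inF d (g i j)) /\ g \in unitmx.

Definition parabolic_pts (d : nat) (g : M2) (x : M2) : Prop :=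
  exists b : M2, SL2 (inF d) b /\ b ord_max ord0 = 0 /\ x = g * b * invmx g.

Definition unipotent_radical_pts (d : nat) (g : M2) (x : M2) : Prop :=
  exists b : M2, SL2 (inF d) b /\ b ord_max ord0 = 0 /\
    b ord0 ord0 = 1 /\ b ord_max ord_max = 1 /\ x = g * b * invmx g.

(* H^1(S, R) = Hom(S, R) (trivial coefficients), for a subgroup S given as
   a predicate on M2; homomorphisms are represented as functions on M2
   normalized to be 0 outside S. *)
Definition H1 (S : M2 -> Prop) (R : pzRingType) : Type :=
  { phi : M2 -> R | (forall x y, S x -> S y -> phi (x * y) = phi x + phi y)
                    /\ (forall x, ~ S x -> phi x = 0) }.

Definition H1_iso (R : pzRingType) (S1 S2 : M2 -> Prop)
  (f : H1 S1 R -> H1 S2 R) : Prop :=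
  bijective f /\
  (forall phi psi chi : H1 S1 R,
     (forall x, sval chi x = sval phi x + sval psi x) ->
     forall x, sval (f chi) x = sval (f phi) x + sval (f psi) x) /\
  (forall (r : R) (phi chi : H1 S1 R),
     (forall x, sval chi x = r * sval phi x) ->
     forall x, sval (f chi) x = r * sval (f phi) x).

From HB Require Import structures.
From mathcomp Require Import all_boot all_order all_algebra all_field.
From mathcomp Require Import ring lra zify.
From Stdlib Require Import IndefiniteDescription ClassicalEpsilon.
From Stdlib Require Import FunctionalExtensionality ProofIrrelevance.
Set Implicit Arguments. Unset Strict Implicit. Unset Printing Implicit Defensive.
Import Order.TTheory GRing.Theory Num.Theory.
Local Open Scope ring_scope.

(* Conjugating by g, an element x of Gamma_P becomes an upper triangular matrix
   with diagonal (a, a^-1), a in F = Q(sqrt(-d)).  Gamma has finite index over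
   Gamma ∩ SL_2(O_F), so some power x^k has integral entries and a^k + a^-k is
   an algebraic integer; then a^k is a unit of O_F, hence +-1 since d <> 1, 3.
   So a is a root of unity lying in F and a unit of O_F, i.e. a = +-1.  Thus
   Gamma_P consists of elements +-u with u unipotent: it is abelian and squares
   land in Gamma_U.  When 2 is invertible, restriction
   Hom(Gamma_P, R) -> Hom(Gamma_U, R) is inverted by psi |-> (x |-> psi(x^2)/2). *)

Lemma int_sqr_cases (x : int) : x = 0 \/ x ^+ 2 = 1 \/ 4 <= x ^+ 2.
Proof.
have [x_small|x_big] : -1 <= x <= 1 \/ (x <= -2) || (2 <= x) by lia.
all: nia.
Qed.

Lemma sqr_add_mul_sqr_eq4 (d : nat) (k m : int) :
  (2 <= d)%N -> d <> 3%N -> d <> 4%N -> k ^+ 2 + d%:Z * m ^+ 2 = 4 -> m = 0.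
Proof.
move=> d_ge2 d_neq3 d_neq4 e.
have [d2|d_gt4] : d = 2%N \/ (4 < d)%N by lia.
- move: e; rewrite d2.
  by case: (int_sqr_cases k) => [->|[|]]; case: (int_sqr_cases m) => [|[|]]; nia.
- case: (int_sqr_cases m) => [|[|]]; nia.
Qed.

Lemma squarefree_mul_sqr_int (d : nat) (B : rat) :
  squarefree_nat d -> d%:R * B ^+ 2 \is a Num.int -> B \is a Num.int.
Proof.
move=> [_ d_sqf] /intrP[c dB].
set n := numq B; set q := denq B.
have ndq : (d * `|n| ^ 2 = `|c| * `|q| ^ 2)%N.
  suff /(congr1 absz) : d%:Z * n ^+ 2 = c * q ^+ 2 by rewrite !abszM absz_nat !mulnn.
  by apply: (@intr_inj rat); rewrite !rmorphM /= numqE -/q -pmulrn -dB; ring.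
rewrite Qint_def -/q; apply/negPn/negP => q_neq1.
have q_gt1 : (1 < `|q|)%N by have := denq_gt0 B; rewrite -/q; lia.
set p := pdiv `|q|; have p_prime : prime p := pdiv_prime q_gt1.
have p_coprime_n : coprime p `|n|.
  by apply: coprime_dvdl (pdiv_dvd _) _; rewrite coprime_sym coprime_num_den.
have : (p * p %| d * `|n| ^ 2)%N.
  by rewrite ndq dvdn_mull // -mulnn dvdn_mul ?pdiv_dvd.
rewrite mulnC Gauss_dvdr; first by move/negP: (d_sqf p p_prime).
by rewrite mulnn coprimeXl // coprimeXr.
Qed.

Section QuadraticField.
Variable d : nat.
Hypothesis d_gt0 : (0 < d)%N.
Local Notation s := (sqrtC (- d%:R) : algC).

Lemma conj_sqrtCN : s^* = - s.
Proof.
have : (s^* - s) * (s^* + s) = 0.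
  by rewrite -subr_sqr -rmorphXn sqrtCK rmorphN rmorph_nat subrr.
move/eqP; rewrite mulf_eq0 subr_eq0 addr_eq0 => /orP[/eqP s_real|/eqP //].
have := mul_conjC_ge0 s; rewrite s_real -expr2 sqrtCK oppr_ge0 lern0.
by rewrite eqn0Ngt d_gt0.
Qed.

Lemma inF1 : inF d 1.
Proof. by exists 1, 0; rewrite rmorph0 rmorph1 mul0r addr0. Qed.

Lemma inFD x y : inF d x -> inF d y -> inF d (x + y).
Proof.
by case=> a1 [b1 ->] [a2 [b2 ->]]; exists (a1 + a2), (b1 + b2); rewrite !rmorphD /=; ring.
Qed.

Lemma inFM x y : inF d x -> inF d y -> inF d (x * y).
Proof.
case=> a1 [b1 ->] [a2 [b2 ->]].
exists (a1 * a2 - d%:R * b1 * b2), (a1 * b2 + a2 * b1).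
transitivity (ratr a1 * ratr a2 + (ratr a1 * ratr b2 + ratr a2 * ratr b1) * s
  + ratr b1 * ratr b2 * s ^+ 2); first ring.
by rewrite sqrtCK; ring.
Qed.

Lemma inFX x n : inF d x -> inF d (x ^+ n).
Proof.
by move=> Fx; elim: n => [|n IHn]; [rewrite expr0; exact: inF1 | rewrite exprS; exact: inFM].
Qed.

Lemma inF_trace_norm w : inF d w -> exists a b : rat,
  [/\ w = ratr a + ratr b * s, w + w^* = ratr (a *+ 2)
    & w * w^* = ratr (a ^+ 2 + d%:R * b ^+ 2)].
Proof.
case=> a [b ->]; exists a, b.
have -> : (ratr a + ratr b * s)^* = ratr a - ratr b * s.
  by rewrite -mulrN -conj_sqrtCN rmorphD (rmorphM _ (ratr b)) !fmorph_rat.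
split => //.
- by rewrite rmorphMn; ring.
- transitivity (ratr a ^+ 2 - ratr b ^+ 2 * s ^+ 2); first ring.
  by rewrite sqrtCK; ring.
Qed.

Lemma inOF_trace_norm_int w : inF d w -> w \in Aint ->
  w + w^* \in Num.int /\ w * w^* \in Num.int.
Proof.
move=> Fw Aw; have Aw' : w^* \in Aint by rewrite Aint_aut.
have [a [b [_ trace_w norm_w]]] := inF_trace_norm Fw.
split; apply: Cint_rat_Aint.
- by rewrite trace_w Crat_rat.
- by rewrite rpredD.
- by rewrite norm_w Crat_rat.
- by rewrite rpredM.
Qed.

Lemma Aint_of_mul_eq1 z w : inF d (z + w) -> z + w \in Aint -> z * w = 1 -> z \in Aint.
Proof.
move=> FT AT zw; have [trace_int norm_int] := inOF_trace_norm_int FT AT.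
have : z ^+ 2 - (z + w) * z + 1 = 0 by rewrite mulrDl -expr2 (mulrC w) zw; ring.
move: (z + w) trace_int norm_int => T trace_int norm_int root_z.
(* z is a root of (X^2 - T X + 1)(X^2 - T^* X + 1), whose coefficients are
   rational integers. *)
pose c := [:: 1; - (T + T^*); 2 + T * T^*; - (T + T^*)].
pose p : {poly algC} := 'X^4 + \poly_(i < 4) c`_i.
apply: (@root_monic_Aint p).
- rewrite /root /p hornerD hornerXn horner_poly !big_ord_recr big_ord0 /=; apply/eqP.
  transitivity ((z ^+ 2 - T * z + 1) * (z ^+ 2 - T^* * z + 1)); first ring.
  by rewrite root_z mul0r.
- rewrite monicE /p lead_coefDl ?lead_coefXn // size_polyXn.
  exact: leq_ltn_trans (size_poly _ _) _.
- apply/polyOverP => i; rewrite coefD coefXn coef_poly.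
  case: i => [|[|[|[|[|i]]]]] /=;
    by rewrite ?add0r ?addr0 ?rpredN ?trace_int ?rpredD ?rpred_nat ?rpred1 ?rpred0.
Qed.

Lemma inOF_unit_norm1 w v : inF d w -> w \in Aint -> v \in Aint -> w * v = 1 ->
  w * w^* = 1.
Proof.
move=> Fw Aw Av wv; have [_ /intrP[n wn]] := inOF_trace_norm_int Fw Aw.
have norm_mul : (w * w^*) * (v * v^*) = 1 by rewrite mulrACA -rmorphM wv rmorph1 mulr1.
have n_neq0 : n%:~R != 0 :> algC.
  by apply: contra_eqN norm_mul; rewrite wn => /eqP->; rewrite mul0r eq_sym oner_neq0.
have : v * v^* \in Num.int.
  apply: Cint_rat_Aint; last by rewrite rpredM ?Aint_aut.
  have -> : v * v^* = (w * w^*)^-1 by rewrite -[RHS]mulr1 -norm_mul mulKf // wn.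
  by rewrite wn rpredV rpred_int.
move=> /intrP[m vm].
have nm : n * m = 1 by apply: (@intr_inj algC); rewrite intrM -wn -vm norm_mul.
have n_ge0 : 0 <= n by rewrite -(ler0z algC) -wn mul_conjC_ge0.
by rewrite wn (_ : n = 1) //; case: (lerP m 0); nia.
Qed.

End QuadraticField.

Section UnitsOF.
Variable d : nat.
Hypotheses (d_sqf : squarefree_nat d) (d_neq1 : d <> 1%N) (d_neq3 : d <> 3%N).
Let d_gt0 : (0 < d)%N := d_sqf.1.

Lemma inOF_unit_pm1 w v : inF d w -> w \in Aint -> v \in Aint -> w * v = 1 ->
  w = 1 \/ w = -1.
Proof.
move=> Fw Aw Av wv.
have [/intrP[k trace_k] _] := inOF_trace_norm_int d_gt0 Fw Aw.
have [a [b [w_ab trace_w norm_w]]] := inF_trace_norm d_gt0 Fw.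
have ratr_inj : injective (ratr : rat -> algC) := fmorph_inj _.
have a2k : a *+ 2 = k%:~R by apply: ratr_inj; rewrite rmorph_int -trace_w.
have norm1 : a ^+ 2 + d%:R * b ^+ 2 = 1.
  by apply: ratr_inj; rewrite rmorph1 -norm_w (inOF_unit_norm1 d_gt0 Fw Aw Av wv).
(* (2a)^2 + d (2b)^2 = 4 with 2a and 2b integers: only d = 1, 3 allow b <> 0. *)
have /intrP[m b2m] : b *+ 2 \is a Num.int.
  apply: (squarefree_mul_sqr_int d_sqf).
  have -> : d%:R * (b *+ 2) ^+ 2 = 4 * (a ^+ 2 + d%:R * b ^+ 2) - (a *+ 2) ^+ 2 by ring.
  by rewrite norm1 mulr1 a2k rpredB ?rpredX ?rpred_int ?rpred_nat.
have m0 : m = 0.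
  have d4 : d <> 4%N by move=> d4; have := d_sqf.2 2 isT; rewrite d4.
  apply: (@sqr_add_mul_sqr_eq4 d k) => //; first lia.
  apply: (@intr_inj rat); rewrite rmorphD rmorphM !rmorphXn /= -a2k -b2m.
  transitivity (4 * (a ^+ 2 + d%:R * b ^+ 2)); first ring.
  by rewrite norm1 mulr1.
have b0 : b = 0 by move/eqP: b2m; rewrite m0 mulrn_eq0 => /eqP.
move: norm1; rewrite b0 expr0n mulr0 addr0 => /eqP; rewrite sqrf_eq1.
rewrite w_ab b0 rmorph0 mul0r addr0.
by case/orP => /eqP ->; [left | right]; rewrite ?rmorphN rmorph1.
Qed.

Lemma inF_pm1_of_Aint_trace_pow a c k : (0 < k)%N -> inF d a -> inF d c ->
  a * c = 1 -> a ^+ k + c ^+ k \in Aint -> a = 1 \/ a = -1.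
Proof.
move=> k_gt0 Fa Fc ac A_trace.
have zw : a ^+ k * c ^+ k = 1 by rewrite -exprMn ac expr1n.
have F_trace : inF d (a ^+ k + c ^+ k) by apply: inFD; apply: inFX.
have Az : a ^+ k \in Aint := Aint_of_mul_eq1 d_gt0 F_trace A_trace zw.
have Aw : c ^+ k \in Aint.
  by apply: (@Aint_of_mul_eq1 _ d_gt0 _ (a ^+ k)); rewrite 1?addrC 1?mulrC.
have z_pm1 := inOF_unit_pm1 (inFX k Fa) Az Aw zw.
have z2 : (a ^+ k) ^+ 2 = 1 by case: z_pm1 => ->; rewrite ?sqrrN expr1n.
have w_z : c ^+ k = a ^+ k by rewrite -[LHS]mul1r -z2 expr2 -mulrA zw mulr1.
have k2_gt0 : (0 < k * 2)%N by rewrite muln_gt0 k_gt0.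
have Aa : a \in Aint by apply: (Aint_unity_root k2_gt0); rewrite unity_rootE exprM z2.
have Ac : c \in Aint by apply: (Aint_unity_root k2_gt0); rewrite unity_rootE exprM w_z z2.
exact: inOF_unit_pm1 Fa Aa Ac ac.
Qed.

End UnitsOF.

Lemma ord2P (i : 'I_2) : i = ord0 \/ i = ord_max.
Proof. by case: i => [[|[|//]]] ?; [left | right]; apply: val_inj. Qed.

Lemma sum_ord2 (V : nmodType) (F : 'I_2 -> V) : \sum_(i < 2) F i = F ord0 + F ord_max.
Proof. by rewrite big_ord_recr big_ord1; congr (F _ + _); apply: val_inj. Qed.

Lemma mul_mx2E (A B : M2) i j :
  (A * B) i j = A i ord0 * B ord0 j + A i ord_max * B ord_max j.
Proof. by rewrite -mulmxE mxE sum_ord2. Qed.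

Lemma det_mx2E (A : M2) :
  \det A = A ord0 ord0 * A ord_max ord_max - A ord0 ord_max * A ord_max ord0.
Proof.
rewrite (expand_det_row _ ord0) sum_ord2 /cofactor !det_mx11 !mxE /=.
have -> : lift ord0 0 = ord_max :> 'I_2 by apply: val_inj.
have -> : lift ord_max 0 = ord0 :> 'I_2 by apply: val_inj.
by rewrite expr0 expr1 !mul1r mulN1r mulrN.
Qed.

Lemma mxtrace2E (A : M2) : \tr A = A ord0 ord0 + A ord_max ord_max.
Proof. exact: sum_ord2. Qed.

Section UpperTriangular.
Variables b b' : M2.
Hypotheses (b10 : b ord_max ord0 = 0) (b'10 : b' ord_max ord0 = 0).

Lemma upper_mx2_mul : [/\ (b * b') ord_max ord0 = 0,
  (b * b') ord0 ord0 = b ord0 ord0 * b' ord0 ord0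
  & (b * b') ord_max ord_max = b ord_max ord_max * b' ord_max ord_max].
Proof. by rewrite !mul_mx2E b10 b'10; split; ring. Qed.

Lemma upper_mx2_comm : b ord0 ord0 = b ord_max ord_max ->
  b' ord0 ord0 = b' ord_max ord_max -> b * b' = b' * b.
Proof.
move=> b_diag b'_diag; apply/matrixP => i j; rewrite !mul_mx2E.
by case: (ord2P i) => ->; case: (ord2P j) => ->; rewrite ?b10 ?b'10 ?b_diag ?b'_diag; ring.
Qed.

End UpperTriangular.

Lemma upper_mx2_exp (b : M2) k : b ord_max ord0 = 0 ->
  [/\ (b ^+ k) ord_max ord0 = 0, (b ^+ k) ord0 ord0 = b ord0 ord0 ^+ k
    & (b ^+ k) ord_max ord_max = b ord_max ord_max ^+ k].
Proof.
move=> b10; elim: k => [|k [bk10 bk00 bk11]].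
  by rewrite !expr0 -idmxE !mxE.
have [e10 e00 e11] := upper_mx2_mul b10 bk10.
by rewrite !exprS e10 e00 e11 bk00 bk11.
Qed.

Section Conjugation.
Variables (R : unitRingType) (g : R).
Hypothesis g_unit : g \is a GRing.unit.

Lemma conjr_mul x y : (g * x / g) * (g * y / g) = g * (x * y) / g.
Proof. by rewrite !mulrA divrK. Qed.

Lemma conjr_exp x k : (g * x / g) ^+ k = g * x ^+ k / g.
Proof.
elim: k => [|k IHk]; first by rewrite !expr0 mulr1 divrr.
by rewrite exprS IHk conjr_mul -exprS.
Qed.

End Conjugation.

Lemma mxtrace_conj (g b : M2) : g \in unitmx -> \tr (g * b * invmx g) = \tr b.
Proof. by move=> g_unit; rewrite -!mulmxE mxtrace_mulC mulmxA mulVmx // mul1mx. Qed.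

Section MxOverSubring.
Variables (R : comPzRingType) (S : subringClosed R).

Lemma mxOver_det n (A : 'M[R]_n) : A \is a mxOver S -> \det A \in S.
Proof.
move=> /mxOverP AS; apply: rpred_sum => sigma _.
by rewrite rpredM ?rpredX ?rpredN1 // rpred_prod.
Qed.

Lemma mxOver_adj n (A : 'M[R]_n) : A \is a mxOver S -> \adj A \is a mxOver S.
Proof.
move=> /mxOverP AS; apply/mxOverP => i j; rewrite mxE /cofactor rpredM ?rpredX ?rpredN1 //.
by apply: mxOver_det; apply/mxOverP => k l; rewrite !mxE.
Qed.

End MxOverSubring.

Lemma pigeonhole_cover (T : eqType) (s : seq T) (P : T -> nat -> Prop) :
  (forall i, exists2 t, t \in s & P t i) ->
  exists t i j, [/\ (i < j)%N, P t i & P t j].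
Proof.
move=> cover.
have /functional_choice[f fP] : forall i, exists t, t \in s /\ P t i.
  by move=> i; have [t ? ?] := cover i; exists t.
have : ~~ uniq [seq f i | i <- iota 0 (size s).+1].
  apply/negP => /uniq_leq_size le_size.
  have /le_size : {subset [seq f i | i <- iota 0 (size s).+1] <= s}.
    by move=> _ /mapP[i _ ->]; case: (fP i).
  by rewrite size_map size_iota ltnn.
case/(uniqPn (f 0%N)) => i [j []]; rewrite size_map size_iota => lt_ij lt_j.
rewrite !(nth_map 0%N) ?size_iota ?(ltn_trans lt_ij) // !nth_iota ?(ltn_trans lt_ij) //.
rewrite !add0n => fij; exists (f i), i, j; split => //; first by case: (fP i).
by rewrite fij; case: (fP j).
Qed.

Lemma SL2_inOF_mxOver (d : nat) (y : M2) : SL2 (inOF d) y -> y \is a mxOver Aint.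
Proof. by case=> yOF _; apply/mxOverP => i j; case: (yOF i j). Qed.

Lemma arithmetic_exp_mxOver_Aint d (G : M2 -> Prop) x :
  arithmetic_subgroup d G -> G x -> exists2 k, (0 < k)%N & x ^+ k \is a mxOver Aint.
Proof.
move=> [[_ [G1 [GM _]]] [[s [_ cover]] _]] Gx.
have Gxi i : G (x ^+ i).
  by elim: i => [|i IHi]; [rewrite expr0 | rewrite exprS; apply: GM].
(* Two powers of x in the same coset of Gamma ∩ SL_2(O_F) differ by an
   integral matrix. *)
have [t [i [j [lt_ij [_ Mi_OF] [_ Mj_OF]]]]] :=
  pigeonhole_cover (fun i => cover _ (Gxi i)).
exists (j - i)%N; first by rewrite subn_gt0.
have -> : x ^+ (j - i) = \adj (invmx t * x ^+ i) * (invmx t * x ^+ j).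
  have -> : invmx t * x ^+ j = (invmx t * x ^+ i) * x ^+ (j - i).
    by rewrite -mulrA -exprD subnKC // ltnW.
  by rewrite mulrA -mulmxE mul_adj_mx Mi_OF.2 mul1mx.
apply: mxOverM; first apply: mxOver_adj.
  exact: SL2_inOF_mxOver Mi_OF.
exact: SL2_inOF_mxOver Mj_OF.
Qed.

Lemma H1_ext (S : M2 -> Prop) (R : pzRingType) (phi psi : H1 S R) :
  sval phi =1 sval psi -> phi = psi.
Proof.
case: phi psi => [f f_hom] [f' f'_hom] /= /functional_extensionality ff'.
by subst f'; rewrite (proof_irrelevance _ f_hom f'_hom).
Qed.

Section Restriction.
Variables (R : pzRingType) (S T : M2 -> Prop).
Hypotheses (T_sub : forall x, T x -> S x)
  (T_mul : forall x y, T x -> T y -> T (x * y)).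

Definition restrict_to (P : M2 -> Prop) (f : M2 -> R) x : R :=
  if excluded_middle_informative (P x) then f x else 0.

Lemma restrict_in (P : M2 -> Prop) f x : P x -> restrict_to P f x = f x.
Proof. by rewrite /restrict_to; case: excluded_middle_informative. Qed.

Lemma restrict_out (P : M2 -> Prop) f x : ~ P x -> restrict_to P f x = 0.
Proof. by rewrite /restrict_to; case: excluded_middle_informative. Qed.

Lemma H1_res_subproof (phi : H1 S R) :
  let f := restrict_to T (sval phi) in
  (forall x y, T x -> T y -> f (x * y) = f x + f y) /\ (forall x, ~ T x -> f x = 0).
Proof.
split=> [x y Tx Ty | x]; last exact: restrict_out.
rewrite !restrict_in //; last exact: T_mul.
exact: (proj1 (svalP phi) _ _ (T_sub Tx) (T_sub Ty)).
Qed.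

Definition H1_res (phi : H1 S R) : H1 T R := exist _ _ (H1_res_subproof phi).

Hypotheses (S_mul : forall x y, S x -> S y -> S (x * y))
  (S_comm : forall x y, S x -> S y -> x * y = y * x)
  (S_sqr : forall x, S x -> T (x * x)).
Variable u : R.
Hypothesis u_half : u * 2%:R = 1.

Lemma half_double (a : R) : u * (a + a) = a.
Proof. by rewrite -mulr2n -mulr_natl mulrA u_half mul1r. Qed.

Lemma H1_half_sqr_subproof (psi : H1 T R) :
  let f := restrict_to S (fun x => u * sval psi (x * x)) in
  (forall x y, S x -> S y -> f (x * y) = f x + f y) /\ (forall x, ~ S x -> f x = 0).
Proof.
split=> [x y Sx Sy | x]; last exact: restrict_out.
rewrite !restrict_in //; last exact: S_mul.
rewrite -mulrDr -(proj1 (svalP psi) _ _ (S_sqr Sx) (S_sqr Sy)).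
by rewrite -mulrA [y * _]mulrA -(S_comm Sx Sy) !mulrA.
Qed.

Definition H1_half_sqr (psi : H1 T R) : H1 S R := exist _ _ (H1_half_sqr_subproof psi).

Lemma H1_res_iso : H1_iso H1_res.
Proof.
split; [exists H1_half_sqr => phi; apply: H1_ext => x /= | split].
- case: (excluded_middle_informative (S x)) => [Sx | nSx].
    rewrite !restrict_in //; last exact: S_sqr.
    by rewrite (proj1 (svalP phi) _ _ Sx Sx) half_double.
  by rewrite restrict_out // (proj2 (svalP phi)).
- case: (excluded_middle_informative (T x)) => [Tx | nTx].
    rewrite !restrict_in //; last exact: T_sub.
    by rewrite (proj1 (svalP phi) _ _ Tx Tx) half_double.
  by rewrite restrict_out // (proj2 (svalP phi)).
- move=> phi psi chi chiE x /=.
  case: (excluded_middle_informative (T x)) => [Tx | nTx].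
    by rewrite !restrict_in //; apply: chiE.
  by rewrite !restrict_out ?addr0.
- move=> r phi chi chiE x /=.
  case: (excluded_middle_informative (T x)) => [Tx | nTx].
    by rewrite !restrict_in //; apply: chiE.
  by rewrite !restrict_out ?mulr0.
Qed.

End Restriction.

Lemma arithmetic_subgroup_mul d (G : M2 -> Prop) x y :
  arithmetic_subgroup d G -> G x -> G y -> G (x * y).
Proof. by case=> [[_ [_ [G_mul _]]] _]; apply: G_mul. Qed.

Lemma SL2_inF_mul d (b b' : M2) :
  SL2 (inF d) b -> SL2 (inF d) b' -> SL2 (inF d) (b * b').
Proof.
move=> [Fb det_b] [Fb' det_b']; split; last by rewrite -mulmxE det_mulmx det_b det_b' mulr1.
by move=> i j; rewrite mul_mx2E; apply: inFD; apply: inFM.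
Qed.

Section ParabolicSubgroup.
Variables (d : nat) (G : M2 -> Prop) (g : M2).
Hypotheses (d_sqf : squarefree_nat d) (d_neq1 : d <> 1%N) (d_neq3 : d <> 3%N)
  (G_arith : arithmetic_subgroup d G) (g_unit : g \in unitmx).

Local Notation GammaP := (fun x => G x /\ parabolic_pts d g x).
Local Notation GammaU := (fun x => G x /\ unipotent_radical_pts d g x).

Lemma parabolic_diag_pm1 b : G (g * b * invmx g) -> SL2 (inF d) b ->
  b ord_max ord0 = 0 ->
  b ord_max ord_max = b ord0 ord0 /\ (b ord0 ord0 = 1 \/ b ord0 ord0 = -1).
Proof.
move=> Gx [Fb det_b] b10.
have ac : b ord0 ord0 * b ord_max ord_max = 1 by rewrite -det_b det_mx2E b10 mulr0 subr0.
have [k k_gt0 /mxOverP xk_Aint] := arithmetic_exp_mxOver_Aint G_arith Gx.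
have [_ bk00 bk11] := upper_mx2_exp k b10.
have : b ord0 ord0 ^+ k + b ord_max ord_max ^+ k \in Aint.
  by rewrite -bk00 -bk11 -mxtrace2E -(mxtrace_conj _ g_unit) -conjr_exp // mxtrace2E rpredD.
move/(inF_pm1_of_Aint_trace_pow d_sqf d_neq1 d_neq3 k_gt0 (Fb _ _) (Fb _ _) ac) => a_pm1.
split=> //; rewrite -[RHS]mulr1 -ac mulrA.
by case: a_pm1 => ->; rewrite ?mulrNN !mul1r.
Qed.

Lemma GammaU_sub x : GammaU x -> GammaP x.
Proof. by case=> Gx [b [Fb [b10 [_ [_ x_b]]]]]; split=> //; exists b. Qed.

Lemma GammaP_mul x y : GammaP x -> GammaP y -> GammaP (x * y).
Proof.
case=> Gx [b [Fb [b10 x_b]]] [Gy [b' [Fb' [b'10 y_b']]]].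
split; first exact: arithmetic_subgroup_mul G_arith Gx Gy.
have [bb'10 _ _] := upper_mx2_mul b10 b'10.
by exists (b * b'); rewrite x_b y_b' conjr_mul //; split=> //; apply: SL2_inF_mul.
Qed.

Lemma GammaU_mul x y : GammaU x -> GammaU y -> GammaU (x * y).
Proof.
case=> Gx [b [Fb [b10 [b00 [b11 x_b]]]]] [Gy [b' [Fb' [b'10 [b'00 [b'11 y_b']]]]]].
split; first exact: arithmetic_subgroup_mul G_arith Gx Gy.
have [bb'10 bb'00 bb'11] := upper_mx2_mul b10 b'10.
exists (b * b'); rewrite x_b y_b' conjr_mul //.
by rewrite bb'00 bb'11 b00 b11 b'00 b'11 mulr1; split=> //; apply: SL2_inF_mul.
Qed.

Lemma GammaP_scalar_diag x : GammaP x -> exists b : M2,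
  [/\ SL2 (inF d) b, b ord_max ord0 = 0, b ord_max ord_max = b ord0 ord0,
      b ord0 ord0 ^+ 2 = 1 & x = g * b * invmx g].
Proof.
case=> Gx [b [Fb [b10 x_b]]]; rewrite x_b in Gx.
have [b_diag b_pm1] := parabolic_diag_pm1 Gx Fb b10.
by exists b; split=> //; case: b_pm1 => ->; rewrite ?sqrrN expr1n.
Qed.

Lemma GammaP_comm x y : GammaP x -> GammaP y -> x * y = y * x.
Proof.
move=> /GammaP_scalar_diag[b [_ b10 b_diag _ ->]] /GammaP_scalar_diag[b' [_ b'10 b'_diag _ ->]].
by rewrite !conjr_mul // (upper_mx2_comm b10 b'10).
Qed.

Lemma GammaP_sqr x : GammaP x -> GammaU (x * x).
Proof.
move=> Px; have [Gx _] := Px; split; first exact: (arithmetic_subgroup_mul G_arith Gx Gx).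
have [b [Fb b10 b_diag b2 ->]] := GammaP_scalar_diag Px.
have [bb10 bb00 bb11] := upper_mx2_mul b10 b10.
have b00_sqr : b ord0 ord0 * b ord0 ord0 = 1 by rewrite -expr2.
exists (b * b); rewrite conjr_mul // bb00 bb11 b_diag b00_sqr.
by split=> //; apply: SL2_inF_mul.
Qed.

End ParabolicSubgroup.

Unset Implicit Arguments.
Set Strict Implicit.

Theorem lemma4p9 (d : nat) (hd : squarefree_nat d) (hd1 : d <> 1%N)
  (hd3 : d <> 3%N) (Gamma : M2 -> Prop) (hG : arithmetic_subgroup d Gamma)
  (g : M2) (hg : is_GL2F d g) (R : pzRingType)
  (h2 : exists u : R, u * 2%:R = 1 /\ 2%:R * u = 1) :
  exists f : H1 (fun x => Gamma x /\ parabolic_pts d g x) R ->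
             H1 (fun x => Gamma x /\ unipotent_radical_pts d g x) R,
    H1_iso f.
Proof.
have [u [u_half _]] := h2.
have [_ g_unit] := hg.
exists (H1_res (@GammaU_sub d Gamma g) (GammaU_mul hG g_unit)).
apply: (H1_res_iso _ _ _ _ _ u_half).
- exact: GammaP_mul hG g_unit.
- exact: GammaP_comm hd hd1 hd3 hG g_unit.
- exact: GammaP_sqr hd hd1 hd3 hG g_unit.
Qed.
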